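(* Let $n$ be such that $n/2$ is odd, let $\Omega\subseteq\mathbb{R}^n$ be open, let $v$ be a scalar-valued function on $\Omega$, let $\lambda\in\mathbb{C}\setminus\{0\}$, and let $\underline{f}$ be a vector-valued solution of the Clifford Riccati equation $\partial_{\underline{x}}\underline{f}+\underline{f}^2=v$. Then any scalar-valued solution $\phi$ of the Schrödinger equation $(-\Delta_n-v)\phi=\lambda^2\phi$ can be uniquely represented as $\phi=g+h$, where $g$ and $h$ are $\mathbb{C}_n$-valued solutions of \[\left(\partial_{\underline{x}}-M^{\underline{f}+\lambda ie_N}\right)g=0\quad\text{and}\quad\left(\partial_{\underline{x}}-M^{\underline{f}-\lambda ie_N}\right)h=0\] respectively.
   Context: $\mathbb{R}_{0,n}$ is the real Clifford algebra generated by an orthonormal basis $e_1,\dots,e_n$ of $\mathbb{R}^n$ with relations $e_je_k+e_ke_j=-2\delta_{jk}$; $\mathbb{C}_n=\mathbb{R}_{0,n}\otimes\mathbb{C}$, with $i$ the complex unit. $e_N=e_1e_2\cdots e_n$ is the pseudo-scalar. The Dirac operator is $\partial_{\underline{x}}=\sum_{j=1}^n e_j\partial_{x_j}$, acting from the left; $\Delta_n=-\partial_{\underline{x}}^2$ is the Laplacian. For a function $F$, $M^F$ is right multiplication: $M^Fg=gF$. *)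

From HB Require Import structures.
From mathcomp Require Import all_boot all_order all_algebra.
From mathcomp Require Import all_classical all_reals all_analysis.
From mathcomp Require Import complex.
Set Implicit Arguments. Unset Strict Implicit. Unset Printing Implicit Defensive.
Import Order.TTheory GRing.Theory Num.Theory.
Import numFieldNormedType.Exports.
Local Open Scope ring_scope.


Notation Cl R n := {ffun {set 'I_n} -> complex R}.
Notation V R n := 'rV[R]_n.

Section Clifford.
Variables (R : realType) (n : nat).

Local Notation C := (complex R).

(* C_n: coefficients on the basis blades e_A, A a subset of {1..n}. *)
Local Notation Cl := {ffun {set 'I_n} -> C}.

(* e_A e_B = clsign A B e_(A Δ B) *)
Definition clsign (A B : {set 'I_n}) : C :=
  (-1) ^+ (#|[set p : 'I_n * 'I_n | (p.1 \in A) && (p.2 \in B) && (p.2 < p.1)%N]|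
           + #|A :&: B|).

Definition symd (A B : {set 'I_n}) := (A :\: B) :|: (B :\: A).

Definition clmul (x y : Cl) : Cl :=
  [ffun D => \sum_(A : {set 'I_n}) clsign A (symd A D) * x A * y (symd A D)].

Definition blade (A : {set 'I_n}) (c : C) : Cl := [ffun B => if B == A then c else 0].
Definition cl_scalar (c : C) : Cl := blade finset.set0 c.
Definition eN : Cl := blade [set: 'I_n] 1.

Definition is_scalar (x : Cl) := forall A : {set 'I_n}, A != finset.set0 -> x A = 0.
Definition is_vector (x : Cl) := forall A : {set 'I_n}, #|A| != 1%N -> x A = 0.

Local Notation V := 'rV[R]_n.
Definition ej (j : 'I_n) : V := \row_k (k == j)%:R.

Definition pdR (j : 'I_n) (u : V -> R) (x : V) : R := 'D_(ej j) u x.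

Fixpoint CkR (k : nat) (O : set V) (u : V -> R) : Prop :=
  match k with
  | 0 => forall x, O x -> {for x, continuous u}
  | k'.+1 => (forall x, O x -> {for x, continuous u}) /\
             forall j, (forall x, O x -> derivable u x (ej j)) /\ CkR k' O (pdR j u)
  end.

Definition smoothR (O : set V) (u : V -> R) := forall k, CkR k O u.
Definition smoothC (O : set V) (u : V -> C) :=
  smoothR O (fun x => @complex.Re R (u x)) /\ smoothR O (fun x => @complex.Im R (u x)).
Definition smoothCl (O : set V) (F : V -> Cl) := forall A, smoothC O (fun x => F x A).

Definition pdC (j : 'I_n) (u : V -> C) (x : V) : C :=
  Complex (pdR j (fun y => @complex.Re R (u y)) x) (pdR j (fun y => @complex.Im R (u y)) x).
Definition pdCl (j : 'I_n) (F : V -> Cl) (x : V) : Cl := [ffun A => pdC j (fun y => F y A) x].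

Definition dirac_op (F : V -> Cl) (x : V) : Cl :=
  \sum_(j < n) clmul (blade [set j] 1) (pdCl j F x).
Definition laplacian (F : V -> Cl) (x : V) : Cl := - dirac_op (dirac_op F) x.
(* M^G F = F G *)
Definition rmul (G : V -> Cl) (F : V -> Cl) (x : V) : Cl := clmul (F x) (G x).

Definition iC : C := Complex 0 1.
Definition lam_i_eN (lam : C) : Cl := clmul (cl_scalar (lam * iC)) eN.
Definition solves_DM (O : set V) (F : V -> Cl) (g : V -> Cl) :=
  forall x, O x -> dirac_op g x - rmul F g x = 0.
Definition decomposition (O : set V) (f : V -> Cl) (lam : C) (phi : V -> C)
    (g h : V -> Cl) :=
  [/\ smoothCl O g, smoothCl O h,
      solves_DM O (fun y => f y + lam_i_eN lam) g,
      solves_DM O (fun y => f y - lam_i_eN lam) h &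
      forall x, O x -> cl_scalar (phi x) = g x + h x].
End Clifford.

Arguments cl_scalar {R n} c.
Arguments eN {R n}.
Arguments iC {R}.
Arguments lam_i_eN {R n} lam.
Arguments ej {R n} j.
Arguments blade {R n} A c.

(* Put a = λ i e_N.  As n is even, e_N anticommutes with every vector, so a
   anticommutes with f; as n/2 is odd, e_N^2 = -1, so a^2 = λ^2 is a nonzero
   scalar and a is invertible.  For a solution φ of the Schrödinger equation let
   X = (∂ - M^f) φ and w = X a^-1.  The Riccati equation for f and the Schrödinger
   equation for φ give ∂X = λ^2 φ - X f; moving a across f then yields
   ∂w = w f + φ a, from which g = (φ + w)/2 and h = (φ - w)/2 solve the two
   equations.  Conversely, the difference k of two decompositions solves both
   equations, so k (f + a) = k (f - a), i.e. 2 k a = 0, whence k = 0. *)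

From HB Require Import structures.
From mathcomp Require Import all_boot all_order all_algebra.
From mathcomp Require Import all_classical all_reals all_analysis.
From mathcomp Require Import complex.
From mathcomp Require Import zify ring.
Import Order.TTheory GRing.Theory Num.Theory.
Import numFieldNormedType.Exports.
Local Open Scope ring_scope.
Set Implicit Arguments. Unset Strict Implicit. Unset Printing Implicit Defensive.

Lemma odd_card_symd (T : finType) (X Y : {set T}) :
  odd #|(X :\: Y) :|: (Y :\: X)| = odd #|X| (+) odd #|Y|.
Proof.
have disj : (X :\: Y) :&: (Y :\: X) = finset.set0.
  by apply/setP => x; rewrite !inE; case: (x \in X); case: (x \in Y).
have : (#|(X :\: Y) :|: (Y :\: X)| + #|X :&: Y|.*2 = #|X| + #|Y|)%N.
  move: (cardsUI (X :\: Y) (Y :\: X)); rewrite disj cards0 addn0 => ->.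
  rewrite -addnn -(cardsID Y X) -(cardsID X Y) finset.setIC; lia.
by move=> /(congr1 odd); rewrite !oddD odd_double addbF.
Qed.

Lemma sign_oddD (R : pzRingType) (a b : nat) :
  odd (a + b) -> (-1) ^+ a = - (-1) ^+ b :> R.
Proof.
rewrite oddD -signr_odd -[in RHS]signr_odd.
by case: (odd a); case: (odd b); rewrite //= ?expr0 ?expr1 ?opprK.
Qed.

Section CliffordAlgebra.
Variables (R : realType) (n : nat).
Local Notation C := (complex R).
Local Notation Cl := (Cl R n).
Implicit Types (A B D E : {set 'I_n}) (x y z : Cl).

Lemma in_symd A B (i : 'I_n) : (i \in symd A B) = (i \in A) (+) (i \in B).
Proof. by rewrite /symd !inE; case: (i \in A); case: (i \in B). Qed.

Lemma symdK A : involutive (symd A).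
Proof. by move=> B; apply/setP => i; rewrite !in_symd addKb. Qed.
Lemma symdC A B : symd A B = symd B A.
Proof. by apply/setP => i; rewrite !in_symd addbC. Qed.
Lemma symdA A B D : symd A (symd B D) = symd (symd A B) D.
Proof. by apply/setP => i; rewrite !in_symd addbA. Qed.
Lemma symd0 A : symd A finset.set0 = A.
Proof. by apply/setP => i; rewrite !in_symd inE addbF. Qed.
Lemma sym0d A : symd finset.set0 A = A.
Proof. by rewrite symdC symd0. Qed.
Lemma symdd A : symd A A = finset.set0.
Proof. by apply/setP => i; rewrite !in_symd inE addbb. Qed.
Lemma symd_eq A B D : (symd A D == B) = (D == symd A B).
Proof. by apply/eqP/eqP => [<-|->]; rewrite symdK. Qed.

Definition inversions A B :=
  #|[set p : 'I_n * 'I_n | (p.1 \in A) && (p.2 \in B) && (p.2 < p.1)%N]|.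

Lemma clsign_inversions A B : clsign R A B = (-1) ^+ (inversions A B + #|A :&: B|).
Proof. by []. Qed.

Lemma odd_inversions_symdl A B D :
  odd (inversions (symd A B) D) = odd (inversions A D) (+) odd (inversions B D).
Proof.
rewrite -odd_card_symd; congr odd; apply: eq_card => p; rewrite !(inE, in_symd).
by case: (p.1 \in A); case: (p.1 \in B); case: (p.2 \in D); case: (_ < _)%N.
Qed.
Lemma odd_inversions_symdr A B D :
  odd (inversions A (symd B D)) = odd (inversions A B) (+) odd (inversions A D).
Proof.
rewrite -odd_card_symd; congr odd; apply: eq_card => p; rewrite !(inE, in_symd).
by case: (p.1 \in A); case: (p.2 \in B); case: (p.2 \in D); case: (_ < _)%N.
Qed.
Lemma odd_card_symdI A B D :
  odd #|symd A B :&: D| = odd #|A :&: D| (+) odd #|B :&: D|.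
Proof.
rewrite -odd_card_symd; congr odd; apply: eq_card => i; rewrite !(inE, in_symd).
by case: (i \in A); case: (i \in B); case: (i \in D).
Qed.
Lemma odd_card_Isymd A B D :
  odd #|A :&: symd B D| = odd #|A :&: B| (+) odd #|A :&: D|.
Proof. by rewrite !(finset.setIC A) odd_card_symdI. Qed.

(* The sign is a 2-cocycle, which is exactly associativity of [clmul]. *)
Lemma clsign_cocycle A B D :
  clsign R A B * clsign R (symd A B) D = clsign R A (symd B D) * clsign R B D.
Proof.
rewrite !clsign_inversions -!exprD -signr_odd -[in RHS]signr_odd.
congr (_ ^+ nat_of_bool _); rewrite !oddD.
rewrite odd_inversions_symdl odd_inversions_symdr odd_card_symdI odd_card_Isymd.
by case: (odd (inversions A B)); case: (odd (inversions A D));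
  case: (odd (inversions B D)); case: (odd #|A :&: B|); case: (odd #|A :&: D|);
  case: (odd #|B :&: D|).
Qed.

Lemma clmulA x y z : clmul (clmul x y) z = clmul x (clmul y z).
Proof.
apply/ffunP => D; rewrite !ffunE.
under eq_bigr => A _ do rewrite ffunE mulr_sumr mulr_suml.
rewrite exchange_big /=; apply: eq_bigr => B _.
rewrite ffunE mulr_sumr (reindex_inj (can_inj (symdK B))) /=.
apply: eq_bigr => E _; rewrite symdK.
have eE : symd E (symd B D) = symd (symd B E) D by rewrite symdA (symdC E B).
have := clsign_cocycle B E (symd (symd B E) D).
rewrite -eE symdK eE => cocycle.
transitivity (clsign R B E * clsign R (symd B E) (symd (symd B E) D)
                * x B * y E * z (symd (symd B E) D)); first by ring.
by rewrite cocycle; ring.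
Qed.

Lemma ffunDE x y A : (x + y) A = x A + y A.
Proof. by rewrite /GRing.add /= /ffun_add ffunE. Qed.
Lemma ffunNE x A : (- x) A = - x A.
Proof. by rewrite /GRing.opp /= /ffun_opp ffunE. Qed.
Lemma ffunBE x y A : (x - y) A = x A - y A.
Proof. by rewrite ffunDE ffunNE. Qed.
Lemma ffunZE (c : C) x A : (c *: x) A = c * x A.
Proof. by rewrite /GRing.scale /= /ffun_scale ffunE. Qed.
Lemma ffun0E A : (0 : Cl) A = 0.
Proof. by rewrite /GRing.zero /= /ffun_zero ffunE. Qed.

Lemma clmulDl x y z : clmul (x + y) z = clmul x z + clmul y z.
Proof.
apply/ffunP => D; rewrite !ffunE -big_split.
by apply: eq_bigr => A _; rewrite ffunDE mulrDr mulrDl.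
Qed.
Lemma clmulDr x y z : clmul x (y + z) = clmul x y + clmul x z.
Proof.
apply/ffunP => D; rewrite !ffunE -big_split.
by apply: eq_bigr => A _; rewrite ffunDE mulrDr.
Qed.
Lemma clmulZl c x y : clmul (c *: x) y = c *: clmul x y.
Proof.
apply/ffunP => D; rewrite ffunZE !ffunE mulr_sumr.
by apply: eq_bigr => A _; rewrite ffunZE; ring.
Qed.
Lemma clmulZr c x y : clmul x (c *: y) = c *: clmul x y.
Proof.
apply/ffunP => D; rewrite ffunZE !ffunE mulr_sumr.
by apply: eq_bigr => A _; rewrite ffunZE; ring.
Qed.
Lemma clmulNl x y : clmul (- x) y = - clmul x y.
Proof. by rewrite -scaleN1r clmulZl scaleN1r. Qed.
Lemma clmulNr x y : clmul x (- y) = - clmul x y.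
Proof. by rewrite -scaleN1r clmulZr scaleN1r. Qed.
Lemma clmulBl x y z : clmul (x - y) z = clmul x z - clmul y z.
Proof. by rewrite clmulDl clmulNl. Qed.
Lemma clmulBr x y z : clmul x (y - z) = clmul x y - clmul x z.
Proof. by rewrite clmulDr clmulNr. Qed.
Lemma clmul0l y : clmul 0 y = 0.
Proof. by rewrite -{1}(scale0r (0 : Cl)) clmulZl scale0r. Qed.
Lemma clmul0r y : clmul y 0 = 0.
Proof. by rewrite -{1}(scale0r (0 : Cl)) clmulZr scale0r. Qed.
Lemma clmul_suml I r (P : pred I) (F : I -> Cl) y :
  clmul (\sum_(i <- r | P i) F i) y = \sum_(i <- r | P i) clmul (F i) y.
Proof. exact: (big_morph (fun a => clmul a y) (fun a b => clmulDl a b y) (clmul0l y)). Qed.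
Lemma clmul_sumr I r (P : pred I) (F : I -> Cl) y :
  clmul y (\sum_(i <- r | P i) F i) = \sum_(i <- r | P i) clmul y (F i).
Proof. exact: (big_morph (fun a => clmul y a) (clmulDr y) (clmul0r y)). Qed.

Lemma blade_expansion x : x = \sum_A blade A (x A).
Proof.
apply/ffunP => D; rewrite sum_ffunE (bigD1 D) //= big1 ?addr0; first by rewrite ffunE eqxx.
by move=> A /negPf nDA; rewrite ffunE eq_sym nDA.
Qed.
Lemma blade0 A : blade A 0 = 0 :> Cl.
Proof. by apply/ffunP => D; rewrite ffun0E ffunE if_same. Qed.
Lemma bladeN A c : blade A (- c) = - blade A c :> Cl.
Proof. by apply/ffunP => D; rewrite ffunNE !ffunE; case: (D == A); rewrite ?oppr0. Qed.
Lemma bladeZ A c d : c *: blade A d = blade A (c * d) :> Cl.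
Proof. by apply/ffunP => D; rewrite ffunZE !ffunE; case: (D == A); rewrite ?mulr0. Qed.

Lemma cl_scalarD (c d : C) : cl_scalar (c + d) = cl_scalar c + cl_scalar d :> Cl.
Proof. by apply/ffunP => D; rewrite ffunDE !ffunE; case: (D == _); rewrite ?addr0. Qed.
Lemma cl_scalarM (c d : C) : cl_scalar (c * d) = c *: cl_scalar d :> Cl.
Proof. by rewrite /cl_scalar bladeZ. Qed.

Lemma clmul_blade A B a b :
  clmul (blade A a) (blade B b) = blade (symd A B) (clsign R A B * a * b) :> Cl.
Proof.
apply/ffunP => D; rewrite !ffunE (bigD1 A) //= big1 ?addr0; last first.
  by move=> E /negPf nEA; rewrite ffunE nEA; ring.
by rewrite !ffunE eqxx symd_eq; case: eqP => [->|_]; rewrite ?symdK; ring.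
Qed.

Lemma clsign0l B : clsign R finset.set0 B = 1.
Proof.
rewrite clsign_inversions finset.set0I cards0 addn0 /inversions.
by rewrite (_ : [set _ | _] = finset.set0) ?cards0 //; apply/setP => p; rewrite !inE.
Qed.
Lemma clsign0r A : clsign R A finset.set0 = 1.
Proof.
rewrite clsign_inversions finset.setI0 cards0 addn0 /inversions.
by rewrite (_ : [set _ | _] = finset.set0) ?cards0 //; apply/setP => p; rewrite !inE andbF.
Qed.

Lemma clmul_scalarl c x : clmul (cl_scalar c) x = c *: x.
Proof.
apply/ffunP => D; rewrite !ffunE (bigD1 finset.set0) //= big1 ?addr0; last first.
  by move=> E /negPf nE0; rewrite ffunE nE0; ring.
by rewrite ?ffunZE ffunE eqxx sym0d clsign0l mul1r.
Qed.
Lemma clmul_scalarr c x : clmul x (cl_scalar c) = c *: x.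
Proof.
apply/ffunP => D; rewrite !ffunE (bigD1 D) //= big1 ?addr0; last first.
  by move=> E /negPf nED; rewrite ffunE symd_eq symd0 eq_sym nED; ring.
by rewrite ffunE symdd eqxx clsign0r -[c *: x D]/(c * x D); ring.
Qed.

Lemma inversions_sum A B : inversions A B =
  (\sum_(i < n) \sum_(j < n) ((i \in A) && (j \in B) && (j < i)%N : nat))%N.
Proof.
rewrite /inversions -sum1_card pair_bigA big_mkcond /=.
by apply: eq_bigr => -[i j] _; rewrite inE; case: (_ && _).
Qed.

Lemma sum_ltn_gtn (k : 'I_n) : (\sum_(i < n) ((i < k)%N + (k < i)%N) = n.-1)%N.
Proof.
have all1 : (\sum_(i < n) ((i < k)%N + (k < i)%N + (i == k)) = n)%N.
  rewrite -[RHS]card_ord -sum1_card; apply: eq_bigr => i _.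
  by rewrite -val_eqE /=; case: ltngtP.
have one_k : (\sum_(i < n) (i == k : nat) = 1)%N.
  by rewrite (bigD1 k) //= eqxx big1 // => i /negPf ->.
by move: all1; rewrite big_split /= one_k; lia.
Qed.

Lemma inversions_setT : ((inversions [set: 'I_n] [set: 'I_n]).*2 = n * n.-1)%N.
Proof.
have -> : inversions [set: 'I_n] [set: 'I_n] = (\sum_(i < n) \sum_(j < n) (j < i)%N : nat)%N.
  by rewrite inversions_sum; apply: eq_bigr => i _; apply: eq_bigr => j _; rewrite !inE.
have swap : (\sum_(i < n) \sum_(j < n) (j < i)%N : nat)%N =
              (\sum_(i < n) \sum_(j < n) (i < j)%N : nat)%N by rewrite exchange_big.
rewrite -addnn {2}swap -big_split /= -[in RHS](card_ord n) -sum_nat_const.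
by apply: eq_bigr => i _; rewrite -big_split /= sum_ltn_gtn card_ord.
Qed.

(* e_N^2 = (-1)^(n(n+1)/2), which is -1 exactly when n/2 is odd. *)
Lemma clsign_setT : ~~ odd n -> odd n./2 -> clsign R [set: 'I_n] [set: 'I_n] = -1.
Proof.
move=> n_even half_odd; rewrite clsign_inversions finset.setIid cardsT card_ord.
have := inversions_setT; have := even_halfK n_even.
set s := inversions _ _; set m := n./2 in half_odd * => <- s2.
have -> : (s + m.*2 = m * (m.*2).+1)%N by move: s2; rewrite -!muln2; nia.
by rewrite -signr_odd oddM /= odd_double half_odd expr1.
Qed.

Lemma clsign_set1_setT (k : 'I_n) :
  ~~ odd n -> clsign R [set k] [set: 'I_n] = - clsign R [set: 'I_n] [set k].
Proof.
move=> n_even; rewrite !clsign_inversions finset.setIT finset.setTI cards1; apply: sign_oddD.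
have -> : inversions [set k] [set: 'I_n] = (\sum_(j < n) (j < k)%N : nat)%N.
  rewrite inversions_sum (bigD1 k) //= [X in (_ + X)%N]big1 ?addn0; last first.
    by move=> i /negPf nik; apply: big1 => j _; rewrite inE nik.
  by apply: eq_bigr => j _; rewrite !inE eqxx.
have -> : inversions [set: 'I_n] [set k] = (\sum_(i < n) (k < i)%N : nat)%N.
  rewrite inversions_sum; apply: eq_bigr => i _.
  rewrite (bigD1 k) //= big1 ?addn0; first by rewrite !inE eqxx.
  by move=> j /negPf njk; rewrite !inE njk andbF.
have n_gt0 : (0 < n)%N by case: n k => [[]|].
rewrite addnACA addnn oddD odd_double addbF -big_split sum_ltn_gtn.
by case: n n_even n_gt0 {k} => // m; rewrite /= negbK.
Qed.

Lemma pseudoscalar_anticomm_vector (c : C) x : ~~ odd n -> is_vector x ->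
  clmul (blade [set: 'I_n] c) x = - clmul x (blade [set: 'I_n] c).
Proof.
move=> n_even x_vec; rewrite [in LHS](blade_expansion x) [in RHS](blade_expansion x).
rewrite clmul_sumr clmul_suml -sumrN; apply: eq_bigr => A _.
have [/cards1P[k ->]|A_not1] := boolP (#|A| == 1%N); last first.
  by rewrite x_vec // blade0 clmul0r clmul0l oppr0.
rewrite !clmul_blade (symdC [set k]) -bladeN (clsign_set1_setT _ n_even).
by congr blade; ring.
Qed.

Lemma lam_i_eNE (lam : C) : lam_i_eN lam = blade [set: 'I_n] (lam * iC) :> Cl.
Proof. by rewrite /lam_i_eN /eN clmul_scalarl bladeZ mulr1. Qed.

Lemma lam_i_eN_sqr (lam : C) : ~~ odd n -> odd n./2 ->
  clmul (lam_i_eN lam) (lam_i_eN lam) = cl_scalar (lam ^+ 2) :> Cl.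
Proof.
move=> n_even half_odd; rewrite lam_i_eNE clmul_blade symdd clsign_setT //.
have iCiC : iC * iC = -1 :> C.
  by apply/eqP; rewrite eq_complex /=; apply/andP; split; apply/eqP; ring.
congr blade; rewrite expr2; transitivity (- (iC * iC) * (lam * lam)); first by ring.
by rewrite iCiC opprK mul1r.
Qed.

Lemma lam_i_eN_anticomm_vector (lam : C) x : ~~ odd n -> is_vector x ->
  clmul (lam_i_eN lam) x = - clmul x (lam_i_eN lam).
Proof. by rewrite lam_i_eNE; exact: pseudoscalar_anticomm_vector. Qed.

End CliffordAlgebra.

Section SmoothCalculus.
Variables (R : realType) (n : nat) (O : set (V R n)).
Hypothesis O_open : open O.
Local Notation V := (V R n).
Local Notation C := (complex R).
Local Notation Cl := (Cl R n).
Local Notation Re := (@complex.Re R).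
Local Notation Im := (@complex.Im R).
Implicit Types (u w : V -> R) (p q : V -> C) (F G : V -> Cl) (j : 'I_n).

Lemma near_eq_on u w x : O x -> (forall y, O y -> u y = w y) -> {near x, u =1 w}.
Proof. by move=> Ox uw; apply: filterS (open_nbhs_nbhs (conj O_open Ox)) => y /uw. Qed.

Lemma continuous_at_eq_on u w x : O x -> (forall y, O y -> u y = w y) ->
  {for x, continuous u} -> {for x, continuous w}.
Proof.
move=> Ox uw u_cont; rewrite /prop_for /continuous_at -(uw x Ox).
by apply: cvg_trans u_cont; exact: near_eq_cvg (near_eq_on Ox uw).
Qed.

Lemma pdR_eq_on j u w x : O x -> (forall y, O y -> u y = w y) -> pdR j u x = pdR j w x.
Proof. by move=> Ox uw; apply: near_eq_derive; exact: near_eq_on. Qed.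

Lemma CkR_eq_on k u w : (forall y, O y -> u y = w y) -> CkR k O u -> CkR k O w.
Proof.
elim: k u w => [|k IH] u w uw /=.
  by move=> u_cont x Ox; exact: continuous_at_eq_on (u_cont x Ox).
move=> [u_cont u_der]; split; first by move=> x Ox; exact: continuous_at_eq_on (u_cont x Ox).
move=> j; have [u_derj u_k] := u_der j; split.
  by move=> x Ox; apply: near_eq_derivable (u_derj x Ox); exact: near_eq_on.
by apply: IH u_k => y Oy; exact: pdR_eq_on.
Qed.

Lemma CkR_pred k u : CkR k.+1 O u -> CkR k O u.
Proof.
elim: k u => [|k IH] u /=; first by case.
by move=> [u_cont u_der]; split => // j; have [? ?] := u_der j; split => //; exact: IH.
Qed.

Lemma CkRD k u w : CkR k O u -> CkR k O w -> CkR k O (fun y => u y + w y).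
Proof.
elim: k u w => [|k IH] u w /=; first by move=> uc wc x Ox; exact: cvgD (uc x Ox) (wc x Ox).
move=> [uc ud] [wc wd]; split; first by move=> x Ox; exact: cvgD (uc x Ox) (wc x Ox).
move=> j; have [udj uk] := ud j; have [wdj wk] := wd j; split.
  by move=> x Ox; exact: derivableD (udj x Ox) (wdj x Ox).
apply: (@CkR_eq_on _ (fun y => pdR j u y + pdR j w y)); last exact: IH.
by move=> y Oy; apply/esym; exact: deriveD (udj y Oy) (wdj y Oy).
Qed.

Lemma CkRM k u w : CkR k O u -> CkR k O w -> CkR k O (fun y => u y * w y).
Proof.
elim: k u w => [|k IH] u w /=; first by move=> uc wc x Ox; exact: cvgM (uc x Ox) (wc x Ox).
move=> uk1 wk1; have uk := CkR_pred uk1; have wk := CkR_pred wk1.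
move: uk1 wk1 => [uc ud] [wc wd]; split; first by move=> x Ox; exact: cvgM (uc x Ox) (wc x Ox).
move=> j; have [udj ukj] := ud j; have [wdj wkj] := wd j; split.
  by move=> x Ox; exact: derivableM (udj x Ox) (wdj x Ox).
apply: (@CkR_eq_on _ (fun y => u y * pdR j w y + w y * pdR j u y)).
  by move=> y Oy; apply/esym; exact: deriveM (udj y Oy) (wdj y Oy).
by apply: CkRD; apply: IH.
Qed.

Lemma CkR_cst k (c : R) : CkR k O (fun _ => c).
Proof.
elim: k c => [|k IH] c /=; first by move=> x _; exact: cst_continuous.
split=> [x _|j]; first exact: cst_continuous.
split=> [x _|]; first exact: derivable_cst.
by apply: CkR_eq_on (IH 0) => y _; rewrite /pdR derive_cst.
Qed.

Lemma smoothR_eq_on u w : (forall y, O y -> u y = w y) -> smoothR O u -> smoothR O w.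
Proof. by move=> uw u_sm k; exact: CkR_eq_on uw (u_sm k). Qed.
Lemma smoothRD u w : smoothR O u -> smoothR O w -> smoothR O (fun y => u y + w y).
Proof. by move=> u_sm w_sm k; exact: CkRD. Qed.
Lemma smoothRM u w : smoothR O u -> smoothR O w -> smoothR O (fun y => u y * w y).
Proof. by move=> u_sm w_sm k; exact: CkRM. Qed.
Lemma smoothR_cst (c : R) : smoothR O (fun _ => c).
Proof. by move=> k; exact: CkR_cst. Qed.
Lemma smoothRN u : smoothR O u -> smoothR O (fun y => - u y).
Proof.
move=> u_sm; apply: (@smoothR_eq_on (fun y => -1 * u y)) => [y _|]; first by rewrite mulN1r.
exact: smoothRM (smoothR_cst _) u_sm.
Qed.
Lemma smoothRB u w : smoothR O u -> smoothR O w -> smoothR O (fun y => u y - w y).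
Proof. by move=> u_sm w_sm; apply: smoothRD => //; exact: smoothRN. Qed.
Lemma smoothR_pd j u : smoothR O u -> smoothR O (pdR j u).
Proof. by move=> u_sm k; have /= [_ u_der] := u_sm k.+1; exact: (u_der j).2. Qed.
Lemma smoothR_derivable j u x : smoothR O u -> O x -> derivable u x (ej j).
Proof. by move=> u_sm Ox; have /= [_ u_der] := u_sm 1%N; exact: (u_der j).1 x Ox. Qed.

Ltac solve_smoothR := repeat first [ assumption | apply: smoothRD | apply: smoothRM
  | apply: smoothRB | apply: smoothRN | apply: smoothR_cst ].

Lemma pdRD j u w x : smoothR O u -> smoothR O w -> O x ->
  pdR j (fun y => u y + w y) x = pdR j u x + pdR j w x.
Proof. by move=> u_sm w_sm Ox; apply: deriveD; exact: smoothR_derivable. Qed.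
Lemma pdRM j u w x : smoothR O u -> smoothR O w -> O x ->
  pdR j (fun y => u y * w y) x = u x * pdR j w x + w x * pdR j u x.
Proof. by move=> u_sm w_sm Ox; apply: deriveM; exact: smoothR_derivable. Qed.
Lemma pdRB j u w x : smoothR O u -> smoothR O w -> O x ->
  pdR j (fun y => u y - w y) x = pdR j u x - pdR j w x.
Proof.
move=> u_sm w_sm Ox; rewrite pdRD //; last exact: smoothRN.
by rewrite /pdR deriveN //; exact: smoothR_derivable.
Qed.
Lemma pdR_cst j (c : R) x : pdR j (fun _ => c) x = 0.
Proof. exact: derive_cst. Qed.

Lemma smoothC_eq_on p q : (forall y, O y -> p y = q y) -> smoothC O p -> smoothC O q.
Proof.
by move=> pq [p_re p_im]; split; [apply: smoothR_eq_on p_re | apply: smoothR_eq_on p_im]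
  => y /pq ->.
Qed.
Lemma smoothCD p q : smoothC O p -> smoothC O q -> smoothC O (fun y => p y + q y).
Proof.
move=> [p1 p2] [q1 q2]; split.
  apply: (@smoothR_eq_on (fun y => Re (p y) + Re (q y))); last by solve_smoothR.
  by move=> y _; case: (p y); case: (q y).
apply: (@smoothR_eq_on (fun y => Im (p y) + Im (q y))); last by solve_smoothR.
by move=> y _; case: (p y); case: (q y).
Qed.
Lemma smoothCM p q : smoothC O p -> smoothC O q -> smoothC O (fun y => p y * q y).
Proof.
move=> [p1 p2] [q1 q2]; split.
  apply: (@smoothR_eq_on (fun y => Re (p y) * Re (q y) - Im (p y) * Im (q y))).
    by move=> y _; case: (p y); case: (q y).
  by solve_smoothR.
apply: (@smoothR_eq_on (fun y => Re (p y) * Im (q y) + Im (p y) * Re (q y))).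
  by move=> y _; case: (p y); case: (q y).
by solve_smoothR.
Qed.
Lemma smoothC_cst (c : C) : smoothC O (fun _ => c).
Proof. by split; apply: smoothR_cst. Qed.
Lemma smoothC_sum I (r : seq I) (P : pred I) (F : I -> V -> C) :
  (forall i, P i -> smoothC O (F i)) -> smoothC O (fun y => \sum_(i <- r | P i) F i y).
Proof.
move=> F_sm; elim: r => [|i r IH].
  by apply: smoothC_eq_on (smoothC_cst 0) => y _; rewrite big_nil.
have [Pi|nPi] := boolP (P i).
  apply: (@smoothC_eq_on (fun y => F i y + \sum_(j <- r | P j) F j y)).
    by move=> y _; rewrite big_cons Pi.
  exact: smoothCD (F_sm i Pi) IH.
by apply: smoothC_eq_on IH => y _; rewrite big_cons (negPf nPi).
Qed.
Lemma smoothC_pd j p : smoothC O p -> smoothC O (pdC j p).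
Proof. by move=> [p_re p_im]; split; apply: smoothR_pd. Qed.

Lemma pdC_eq_on j p q x : O x -> (forall y, O y -> p y = q y) -> pdC j p x = pdC j q x.
Proof.
move=> Ox pq; rewrite /pdC.
rewrite (@pdR_eq_on j (fun y => Re (p y)) (fun y => Re (q y))) //; last by move=> y /pq ->.
by rewrite (@pdR_eq_on j (fun y => Im (p y)) (fun y => Im (q y))) // => y /pq ->.
Qed.
Lemma pdCD j p q x : smoothC O p -> smoothC O q -> O x ->
  pdC j (fun y => p y + q y) x = pdC j p x + pdC j q x.
Proof.
move=> [p1 p2] [q1 q2] Ox; rewrite /pdC.
rewrite (@pdR_eq_on j (fun y => Re (p y + q y)) (fun y => Re (p y) + Re (q y))) //; last first.
  by move=> y _; case: (p y); case: (q y).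
rewrite (@pdR_eq_on j (fun y => Im (p y + q y)) (fun y => Im (p y) + Im (q y))) //; last first.
  by move=> y _; case: (p y); case: (q y).
by rewrite !pdRD.
Qed.
Lemma pdCM j p q x : smoothC O p -> smoothC O q -> O x ->
  pdC j (fun y => p y * q y) x = pdC j p x * q x + p x * pdC j q x.
Proof.
move=> [p1 p2] [q1 q2] Ox; rewrite /pdC.
rewrite (@pdR_eq_on j (fun y => Re (p y * q y))
                     (fun y => Re (p y) * Re (q y) - Im (p y) * Im (q y))) //; last first.
  by move=> y _; case: (p y); case: (q y).
rewrite (@pdR_eq_on j (fun y => Im (p y * q y))
                     (fun y => Re (p y) * Im (q y) + Im (p y) * Re (q y))) //; last first.
  by move=> y _; case: (p y); case: (q y).
rewrite pdRB ?pdRD ?pdRM //; try by solve_smoothR.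
case: (p x) => ? ?; case: (q x) => ? ?.
by apply/eqP; rewrite eq_complex /=; apply/andP; split; apply/eqP; ring.
Qed.
Lemma pdC_cst j (c : C) x : pdC j (fun _ => c) x = 0.
Proof. by rewrite /pdC !pdR_cst. Qed.
Lemma pdC_sum I (r : seq I) (P : pred I) (F : I -> V -> C) j x :
  (forall i, P i -> smoothC O (F i)) -> O x ->
  pdC j (fun y => \sum_(i <- r | P i) F i y) x = \sum_(i <- r | P i) pdC j (F i) x.
Proof.
move=> F_sm Ox; elim: r => [|i r IH].
  rewrite big_nil; transitivity (pdC j (fun=> 0) x); last exact: pdC_cst.
  by apply: pdC_eq_on => // y _; rewrite big_nil.
rewrite big_cons -IH; have [Pi|nPi] := boolP (P i); last first.
  by apply: pdC_eq_on => // y _; rewrite big_cons (negPf nPi).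
rewrite -pdCD //; [|exact: F_sm|exact: smoothC_sum].
by apply: pdC_eq_on => // y _; rewrite big_cons Pi.
Qed.

Lemma smoothCl_eq_on F G : (forall y, O y -> F y = G y) -> smoothCl O F -> smoothCl O G.
Proof. by move=> FG F_sm A; apply: smoothC_eq_on (F_sm A) => y /FG ->. Qed.
Lemma smoothClD F G : smoothCl O F -> smoothCl O G -> smoothCl O (fun y => F y + G y).
Proof.
by move=> F_sm G_sm A; apply: smoothC_eq_on (smoothCD (F_sm A) (G_sm A)) => y _; rewrite ffunDE.
Qed.
Lemma smoothClZ p F : smoothC O p -> smoothCl O F -> smoothCl O (fun y => p y *: F y).
Proof.
by move=> p_sm F_sm A; apply: smoothC_eq_on (smoothCM p_sm (F_sm A)) => y _; rewrite ffunZE.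
Qed.
Lemma smoothCl_cst (K : Cl) : smoothCl O (fun _ => K).
Proof. by move=> A; exact: smoothC_cst. Qed.
Lemma smoothClN F : smoothCl O F -> smoothCl O (fun y => - F y).
Proof.
move=> F_sm; apply: (@smoothCl_eq_on (fun y => (-1) *: F y)) => [y _|]; first by rewrite scaleN1r.
exact: smoothClZ (smoothC_cst _) F_sm.
Qed.
Lemma smoothClB F G : smoothCl O F -> smoothCl O G -> smoothCl O (fun y => F y - G y).
Proof. by move=> F_sm G_sm; apply: smoothClD => //; exact: smoothClN. Qed.
Lemma smoothCl_clmul F G :
  smoothCl O F -> smoothCl O G -> smoothCl O (fun y => clmul (F y) (G y)).
Proof.
move=> F_sm G_sm A.
apply: (@smoothC_eq_on (fun y => \sum_B clsign R B (symd B A) * F y B * G y (symd B A))).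
  by move=> y _; rewrite ffunE.
by apply: smoothC_sum => B _; apply: smoothCM => //; apply: smoothCM => //; exact: smoothC_cst.
Qed.
Lemma smoothCl_scalar p : smoothC O p -> smoothCl O (fun y => cl_scalar (p y)).
Proof.
move=> p_sm A; have [->|A0] := eqVneq A finset.set0.
  by apply: smoothC_eq_on p_sm => y _; rewrite ffunE eqxx.
by apply: smoothC_eq_on (smoothC_cst 0) => y _; rewrite ffunE (negPf A0).
Qed.
Lemma smoothCl_dirac F : smoothCl O F -> smoothCl O (dirac_op F).
Proof.
move=> F_sm A.
apply: (@smoothC_eq_on (fun y => \sum_(j < n) clmul (blade [set j] 1) (pdCl j F y) A)).
  by move=> y _; rewrite sum_ffunE.
apply: smoothC_sum => j _; apply: smoothCl_clmul; first exact: smoothCl_cst.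
by move=> B; apply: smoothC_eq_on (smoothC_pd j (F_sm B)) => y _; rewrite ffunE.
Qed.

Lemma pdCl_eq_on j F G x : O x -> (forall y, O y -> F y = G y) -> pdCl j F x = pdCl j G x.
Proof. by move=> Ox FG; apply/ffunP => A; rewrite !ffunE; apply: pdC_eq_on => // y /FG ->. Qed.
Lemma pdClD j F G x : smoothCl O F -> smoothCl O G -> O x ->
  pdCl j (fun y => F y + G y) x = pdCl j F x + pdCl j G x.
Proof.
move=> F_sm G_sm Ox; apply/ffunP => A; rewrite ffunDE !ffunE -pdCD //.
by apply: pdC_eq_on => // y _; rewrite ffunDE.
Qed.
Lemma pdClZ j p F x : smoothC O p -> smoothCl O F -> O x ->
  pdCl j (fun y => p y *: F y) x = pdC j p x *: F x + p x *: pdCl j F x.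
Proof.
move=> p_sm F_sm Ox; apply/ffunP => A; rewrite ffunDE !ffunZE !ffunE -pdCM //.
by apply: pdC_eq_on => // y _; rewrite ffunZE.
Qed.
Lemma pdClN j F x : smoothCl O F -> O x -> pdCl j (fun y => - F y) x = - pdCl j F x.
Proof.
move=> F_sm Ox; rewrite (@pdCl_eq_on j _ (fun y => (-1) *: F y)) // => [|y _].
  by rewrite pdClZ ?pdC_cst ?scale0r ?add0r ?scaleN1r //; exact: smoothC_cst.
by rewrite scaleN1r.
Qed.
Lemma pdClB j F G x : smoothCl O F -> smoothCl O G -> O x ->
  pdCl j (fun y => F y - G y) x = pdCl j F x - pdCl j G x.
Proof. by move=> F_sm G_sm Ox; rewrite pdClD ?pdClN //; exact: smoothClN. Qed.
Lemma pdCl_clmulr j F (K : Cl) x : smoothCl O F -> O x ->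
  pdCl j (fun y => clmul (F y) K) x = clmul (pdCl j F x) K.
Proof.
move=> F_sm Ox; apply/ffunP => A; rewrite !ffunE.
rewrite (@pdC_eq_on j _ (fun y => \sum_B clsign R B (symd B A) * F y B * K (symd B A))) //;
  last first.
  by move=> y _; rewrite ffunE.
have term_sm B : smoothC O (fun y => clsign R B (symd B A) * F y B).
  exact: smoothCM (smoothC_cst _) (F_sm B).
rewrite pdC_sum // => [|B _]; last exact: smoothCM (term_sm B) (smoothC_cst _).
apply: eq_bigr => B _; rewrite pdCM ?pdCM ?pdC_cst ?ffunE //; try exact: smoothC_cst.
by ring.
Qed.
Lemma pdCl_scalar j p x : smoothC O p -> O x ->
  pdCl j (fun y => cl_scalar (p y)) x = cl_scalar (pdC j p x).
Proof.
move=> p_sm Ox; apply/ffunP => A; rewrite !ffunE; case: ifP => A0.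
  by apply: pdC_eq_on => // y _; rewrite ffunE A0.
transitivity (pdC j (fun=> 0) x); last exact: pdC_cst.
by apply: pdC_eq_on => // y _; rewrite ffunE A0.
Qed.

Lemma dirac_op_eq_on F G x : O x -> (forall y, O y -> F y = G y) -> dirac_op F x = dirac_op G x.
Proof. by move=> Ox FG; apply: eq_bigr => j _; rewrite (pdCl_eq_on j Ox FG). Qed.
Lemma dirac_opD F G x : smoothCl O F -> smoothCl O G -> O x ->
  dirac_op (fun y => F y + G y) x = dirac_op F x + dirac_op G x.
Proof.
move=> F_sm G_sm Ox; rewrite /dirac_op -big_split.
by apply: eq_bigr => j _; rewrite pdClD // clmulDr.
Qed.
Lemma dirac_opB F G x : smoothCl O F -> smoothCl O G -> O x ->
  dirac_op (fun y => F y - G y) x = dirac_op F x - dirac_op G x.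
Proof.
move=> F_sm G_sm Ox; rewrite /dirac_op -sumrB.
by apply: eq_bigr => j _; rewrite pdClB // clmulBr.
Qed.
Lemma dirac_opZ (c : C) F x : smoothCl O F -> O x ->
  dirac_op (fun y => c *: F y) x = c *: dirac_op F x.
Proof.
move=> F_sm Ox; rewrite /dirac_op scaler_sumr; apply: eq_bigr => j _.
by rewrite (@pdClZ j (fun _ => c)) ?pdC_cst ?scale0r ?add0r ?clmulZr //; exact: smoothC_cst.
Qed.
Lemma dirac_op_clmulr F (K : Cl) x : smoothCl O F -> O x ->
  dirac_op (fun y => clmul (F y) K) x = clmul (dirac_op F x) K.
Proof.
move=> F_sm Ox; rewrite /dirac_op clmul_suml; apply: eq_bigr => j _.
by rewrite pdCl_clmulr // clmulA.
Qed.
(* Leibniz rule: a scalar factor commutes with the generators [e_j]. *)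
Lemma dirac_op_scale p F x : smoothC O p -> smoothCl O F -> O x ->
  dirac_op (fun y => p y *: F y) x =
  clmul (dirac_op (fun y => cl_scalar (p y)) x) (F x) + p x *: dirac_op F x.
Proof.
move=> p_sm F_sm Ox; rewrite /dirac_op clmul_suml scaler_sumr -big_split; apply: eq_bigr => j _.
by rewrite pdClZ // pdCl_scalar // clmul_scalarr clmulDr !clmulZr clmulZl.
Qed.

Section RiccatiDecomposition.
Implicit Types (g h k : V -> Cl).

Lemma solves_DME F g : solves_DM O F g <-> forall x, O x -> dirac_op g x = clmul (g x) (F x).
Proof.
split=> gP x /gP; first by move/eqP; rewrite subr_eq0 => /eqP.
by rewrite /rmul => ->; rewrite subrr.
Qed.

Lemma solves_DM_eq_on F g1 g2 :
  (forall y, O y -> g1 y = g2 y) -> solves_DM O F g1 -> solves_DM O F g2.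
Proof.
move=> g12 /solves_DME g1P; apply/solves_DME => x Ox.
by rewrite -(dirac_op_eq_on Ox g12) g1P // g12.
Qed.

Lemma solves_DMB F g1 g2 : smoothCl O g1 -> smoothCl O g2 ->
  solves_DM O F g1 -> solves_DM O F g2 -> solves_DM O F (fun y => g1 y - g2 y).
Proof.
move=> g1_sm g2_sm /solves_DME g1P /solves_DME g2P; apply/solves_DME => x Ox.
by rewrite dirac_opB // g1P // g2P // clmulBl.
Qed.

Lemma solves_DMN F g : smoothCl O g -> solves_DM O F g -> solves_DM O F (fun y => - g y).
Proof.
move=> g_sm /solves_DME gP; apply/solves_DME => x Ox.
rewrite (@dirac_op_eq_on _ (fun y => (-1) *: g y)) // => [|y _]; last by rewrite scaleN1r.
by rewrite dirac_opZ // gP // scaleN1r clmulNl.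
Qed.

Variables (a : Cl) (mu : C).
Hypotheses (a_sqr : clmul a a = cl_scalar mu) (mu_neq0 : mu != 0).

Lemma clmulr_eq0 (k : Cl) : clmul k a = 0 -> k = 0.
Proof.
move=> ka0; rewrite -[k]scale1r -(mulVf mu_neq0) -scalerA -(clmul_scalarr mu k) -a_sqr.
by rewrite -clmulA ka0 clmul0l scaler0.
Qed.

Lemma solves_DM_pair_uniq f g1 h1 g2 h2 :
  smoothCl O g1 -> smoothCl O g2 -> smoothCl O h1 -> smoothCl O h2 ->
  solves_DM O (fun y => f y + a) g1 -> solves_DM O (fun y => f y + a) g2 ->
  solves_DM O (fun y => f y - a) h1 -> solves_DM O (fun y => f y - a) h2 ->
  (forall y, O y -> g1 y + h1 y = g2 y + h2 y) ->
  forall x, O x -> g1 x = g2 x /\ h1 x = h2 x.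
Proof.
move=> g1_sm g2_sm h1_sm h2_sm g1P g2P h1P h2P sum12 x Ox.
pose k y := g1 y - g2 y.
have h12 y : O y -> h1 y - h2 y = - k y.
  move=> Oy; apply/eqP; rewrite /k opprB subr_eq; apply/eqP.
  by rewrite addrAC -sum12 // addrAC subrr add0r.
have kP : solves_DM O (fun y => f y + a) k by exact: solves_DMB.
have kN : solves_DM O (fun y => f y - a) k.
  apply: solves_DM_eq_on (solves_DMN (smoothClB h1_sm h2_sm) (solves_DMB h1_sm h2_sm h1P h2P)).
  by move=> y Oy; rewrite h12 ?opprK.
have ka : clmul (k x) a = 0.
  move/solves_DME: kP => /(_ x Ox) kPx; move/solves_DME: kN => /(_ x Ox).
  rewrite kPx clmulDr clmulBr => /addrI /eqP; rewrite -subr_eq0 opprK.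
  rewrite -[X in X + _]scale1r -[X in _ + X]scale1r -scalerDl scaler_eq0 => /orP[|/eqP //].
  by rewrite (_ : 1 + 1 = 2%:R) // pnatr_eq0.
have k0 := clmulr_eq0 ka.
have g12 : g1 x = g2 x by apply/eqP; rewrite -subr_eq0 -/(k x) k0.
by split=> //; apply/eqP; rewrite -subr_eq0 h12 // k0 oppr0.
Qed.

Variables (f : V -> Cl) (v phi : V -> C).
Hypotheses (f_sm : smoothCl O f) (phi_sm : smoothC O phi).
Hypothesis f_anticomm_a : forall x, O x -> clmul a (f x) = - clmul (f x) a.
Hypothesis f_riccati : forall x, O x -> dirac_op f x + clmul (f x) (f x) = cl_scalar (v x).
Hypothesis phi_schroedinger : forall x, O x ->
  dirac_op (dirac_op (fun y => cl_scalar (phi y))) x = cl_scalar ((v x + mu) * phi x).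

Local Notation Phi := (fun y => cl_scalar (phi y)).

(* [dirac_twisted] is (∂ - M^f) φ and [riccati_partner] is (∂ - M^f) φ a^-1, as a^-1 = a / mu. *)
Definition dirac_twisted y := dirac_op Phi y - phi y *: f y.
Definition riccati_partner y := mu^-1 *: clmul (dirac_twisted y) a.
Definition riccati_part (s : C) y := 2^-1 *: (Phi y + s *: riccati_partner y).

Lemma smoothCl_Phi : smoothCl O Phi.
Proof. exact: smoothCl_scalar. Qed.

Lemma smoothCl_dirac_twisted : smoothCl O dirac_twisted.
Proof. exact: smoothClB (smoothCl_dirac smoothCl_Phi) (smoothClZ phi_sm f_sm). Qed.

Lemma smoothCl_riccati_partner : smoothCl O riccati_partner.
Proof.
apply: smoothClZ (smoothC_cst _) _.
exact: smoothCl_clmul smoothCl_dirac_twisted (smoothCl_cst _).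
Qed.

Lemma smoothCl_riccati_part s : smoothCl O (riccati_part s).
Proof.
apply: smoothClZ (smoothC_cst _) (smoothClD smoothCl_Phi _).
exact: smoothClZ (smoothC_cst _) smoothCl_riccati_partner.
Qed.

Lemma riccati_partner_mul_a y : clmul (riccati_partner y) a = dirac_twisted y.
Proof. by rewrite clmulZl clmulA a_sqr clmul_scalarr scalerA mulVf // scale1r. Qed.

Lemma dirac_twisted_mul_a y : clmul (dirac_twisted y) a = mu *: riccati_partner y.
Proof. by rewrite scalerA divff // scale1r. Qed.

Lemma dirac_dirac_twisted x : O x ->
  dirac_op dirac_twisted x = mu *: Phi x - clmul (dirac_twisted x) (f x).
Proof.
move=> Ox; have Df : dirac_op f x = cl_scalar (v x) - clmul (f x) (f x).
  by rewrite -(f_riccati Ox) addrK.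
have vphi : phi x *: cl_scalar (v x) = v x *: Phi x :> Cl by rewrite /= -!cl_scalarM mulrC.
rewrite dirac_opB //; [|exact: smoothCl_dirac smoothCl_Phi|exact: smoothClZ phi_sm f_sm].
rewrite dirac_op_scale // phi_schroedinger // Df mulrDl cl_scalarD !cl_scalarM.
rewrite clmulBl clmulZl scalerBr vphi.
by apply/ffunP => A; rewrite !(ffunDE, ffunBE, ffunNE, ffunZE); ring.
Qed.

Lemma dirac_riccati_partner x : O x ->
  dirac_op riccati_partner x = clmul (riccati_partner x) (f x) + phi x *: a.
Proof.
move=> Ox; have twisted_a_sm := smoothCl_clmul smoothCl_dirac_twisted (smoothCl_cst a).
rewrite dirac_opZ // dirac_op_clmulr // ?dirac_dirac_twisted //;
  last exact: smoothCl_dirac_twisted.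
have fa : clmul (f x) a = - clmul a (f x) by rewrite f_anticomm_a // opprK.
rewrite clmulBl clmulZl clmul_scalarl clmulA fa clmulNr -clmulA.
rewrite dirac_twisted_mul_a clmulZl opprK scalerDr !scalerA mulVf // mul1r scale1r.
by rewrite addrC.
Qed.

Lemma dirac_riccati_part (s : C) x : s ^+ 2 = 1 -> O x ->
  dirac_op (riccati_part s) x = clmul (riccati_part s x) (f x + s *: a).
Proof.
move=> s2 Ox; have psi_sm := smoothClZ (smoothC_cst s) smoothCl_riccati_partner.
have DPhi : dirac_op Phi x = clmul (riccati_partner x) a + phi x *: f x.
  by rewrite riccati_partner_mul_a /dirac_twisted subrK.
rewrite dirac_opZ; [|exact: smoothClD smoothCl_Phi psi_sm|exact: Ox].
rewrite dirac_opD; [|exact: smoothCl_Phi|exact: psi_sm|exact: Ox].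
rewrite dirac_opZ; [|exact: smoothCl_riccati_partner|exact: Ox].
rewrite dirac_riccati_partner // DPhi /riccati_part /=; move: (riccati_partner x) => P.
rewrite clmulZl clmulDl !clmulDr !clmulZl !clmulZr !clmul_scalarl scalerA -expr2 s2 scale1r.
congr (_ *: _); rewrite scalerDr addrACA [RHS]addrC.
by rewrite [s *: clmul P (f x) + _]addrC.
Qed.

Lemma riccati_part_sum y : riccati_part 1 y + riccati_part (-1) y = Phi y.
Proof.
rewrite /riccati_part -scalerDr addrACA scale1r scaleN1r subrr addr0.
by rewrite scalerDr -scalerDl -div1r -splitr scale1r.
Qed.

End RiccatiDecomposition.

End SmoothCalculus.

Unset Implicit Arguments.

Theorem corollary7p1 (R : realType) (n : nat)
  (hn_even : ~~ odd n) (hn_half : odd n./2)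
  (Omega : set (V R n)) (hOmega : open Omega)
  (v : V R n -> complex R) (hv : smoothC Omega v)
  (lam : complex R) (hlam : lam != 0)
  (f : V R n -> Cl R n)
  (hf_vec : forall x, Omega x -> is_vector (f x))
  (hf_smooth : smoothCl Omega f)
  (hf_riccati : forall x, Omega x -> dirac_op f x + clmul (f x) (f x) = cl_scalar (v x))
  (phi : V R n -> complex R) (hphi : smoothC Omega phi)
  (hphi_schr : forall x, Omega x ->
     - laplacian (fun y => cl_scalar (phi y)) x - clmul (cl_scalar (v x)) (cl_scalar (phi x))
     = cl_scalar (lam ^+ 2 * phi x)) :
  exists g h, decomposition Omega f lam phi g h /\
    forall g' h', decomposition Omega f lam phi g' h' ->
      forall x, Omega x -> g' x = g x /\ h' x = h x.
Proof.
have a_sqr := lam_i_eN_sqr lam hn_even hn_half.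
have mu_neq0 : lam ^+ 2 != 0 by rewrite expf_neq0.
have a_anticomm x : Omega x -> clmul (lam_i_eN lam) (f x) = - clmul (f x) (lam_i_eN lam).
  by move=> Ox; exact: lam_i_eN_anticomm_vector hn_even (hf_vec x Ox).
have schroedinger x : Omega x ->
    dirac_op (dirac_op (fun y => cl_scalar (phi y))) x = cl_scalar ((v x + lam ^+ 2) * phi x).
  move=> Ox; apply/eqP; rewrite mulrDl cl_scalarD cl_scalarM addrC -subr_eq.
  by rewrite -(hphi_schr x Ox) /laplacian opprK clmul_scalarl.
have part_sm s := smoothCl_riccati_part hOmega (lam_i_eN lam) (lam ^+ 2) hf_smooth hphi s.
have dirac_part s := dirac_riccati_part hOmega a_sqr mu_neq0 hf_smooth hphi
  a_anticomm hf_riccati schroedinger (s := s).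
pose g := riccati_part (lam_i_eN lam) (lam ^+ 2) f phi 1.
pose h := riccati_part (lam_i_eN lam) (lam ^+ 2) f phi (-1).
have dec : decomposition Omega f lam phi g h.
  split; [exact: part_sm|exact: part_sm| | |].
  - by apply/solves_DME => x Ox; rewrite dirac_part ?expr1n ?scale1r.
  - by apply/solves_DME => x Ox; rewrite dirac_part ?sqrrN ?expr1n ?scaleN1r.
  - by move=> x _; rewrite riccati_part_sum.
exists g, h; split=> // g' h' [g'_sm h'_sm g'P h'P g'h'] x Ox.
case: dec => g_sm h_sm gP hP gh.
have sums y : Omega y -> g' y + h' y = g y + h y by move=> Oy; rewrite -g'h' // -gh.
exact: (solves_DM_pair_uniq hOmega a_sqr mu_neq0 g'_sm g_sm h'_sm h_sm g'P gP h'P hP sums Ox).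
Qed.
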